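(* Let $(\boldsymbol X,Y)\sim\mathbb{P}_{\boldsymbol X,Y}$ with $\boldsymbol X\in\mathcal{X}\subset\mathbb{R}^{d_1\times d_2}$, $Y=f(\boldsymbol X)+\varepsilon$ where $f(\boldsymbol X)=\mathbb{E}(Y|\boldsymbol X)$, $f:\mathcal{X}\to[-1,1]$, $\varepsilon$ is a bounded mean-zero noise (possibly depending on $\boldsymbol X$) and $Y\in[-1,1]$. Fix $\pi\in[-1,1]$ and $r\in\mathbb{N}_+$, and suppose $f$ is $(r,\pi)$-sign representable. Then for every function $\bar f:\mathcal{X}\to\mathbb{R}$ with $\mathrm{sgn}\,\bar f=\mathrm{sgn}(f-\pi)$ on $\mathcal{X}$, we have $\mathrm{Risk}_\pi(\bar f)=\inf\{\mathrm{Risk}_\pi(\phi):\phi\in\Phi(r)\}$.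
   Context: Sign convention: $\mathrm{sgn}(x)=1$ if $x>0$ and $-1$ otherwise. $f$ is $(r,\pi)$-sign representable if there exist $\boldsymbol B\in\mathbb{R}^{d_1\times d_2}$ with $\mathrm{rank}(\boldsymbol B)\le r$ and $b\in\mathbb{R}$ such that $\mathrm{sgn}(f(\boldsymbol X)-\pi)=\mathrm{sgn}(\langle\boldsymbol X,\boldsymbol B\rangle+b)$ for all $\boldsymbol X\in\mathcal{X}$, with $\langle\boldsymbol X,\boldsymbol B\rangle=\mathrm{tr}(\boldsymbol X\boldsymbol B^T)$. $\Phi(r)=\{\phi:\boldsymbol X\mapsto\langle\boldsymbol X,\boldsymbol B\rangle+b\mid \mathrm{rank}(\boldsymbol B)\le r,\ (\boldsymbol B,b)\in\mathbb{R}^{d_1\times d_2}\times\mathbb{R}\}$. Weighted classification risk: $\mathrm{Risk}_\pi(\phi)=\frac12\mathbb{E}\big[|Y-\pi|\,|\mathrm{sgn}(Y-\pi)-\mathrm{sgn}\,\phi(\boldsymbol X)|\big]$, expectation over $(\boldsymbol X,Y)\sim\mathbb{P}_{\boldsymbol X,Y}$. *)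

From HB Require Import structures.
From mathcomp Require Import all_boot all_order all_algebra.
From mathcomp Require Import all_classical all_reals all_analysis.
Set Implicit Arguments. Unset Strict Implicit. Unset Printing Implicit Defensive.
Import Order.TTheory GRing.Theory Num.Theory.
Local Open Scope classical_set_scope.
Local Open Scope ring_scope.

Definition sgn (R : realType) (x : R) : R := if 0 < x then 1 else -1.

Definition matdot (R : realType) (d1 d2 : nat) (M B : 'M[R]_(d1, d2)) : R :=
  \tr (M *m B^T).

Definition Phi (R : realType) (d1 d2 r : nat) : set ('M[R]_(d1, d2) -> R) :=
  [set phi | exists (B : 'M[R]_(d1, d2)) (b : R),
     (\rank B <= r)%N /\ phi = (fun M => matdot M B + b)].

Definition sign_representable (R : realType) (d1 d2 : nat)
  (Xs : set 'M[R]_(d1, d2)) (f : 'M[R]_(d1, d2) -> R) (r : nat) (pi : R) : Prop :=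
  exists (B : 'M[R]_(d1, d2)) (b : R), (\rank B <= r)%N /\
    forall M, Xs M -> sgn (f M - pi) = sgn (matdot M B + b).

Definition sigmaX (d : measure_display) (T : measurableType d) (R : realType)
  (d1 d2 : nat) (X : T -> 'M[R]_(d1, d2)) : set (set T) :=
  <<s setT, \bigcup_(ij in [set: 'I_d1 * 'I_d2])
        preimage_set_system setT (fun w => X w ij.1 ij.2)
          (@measurable _ R) >>.

Definition is_cond_exp (d : measure_display) (T : measurableType d) (R : realType)
  (P : probability T R) (d1 d2 : nat) (X : T -> 'M[R]_(d1, d2)) (Y : T -> R)
  (g : T -> R) : Prop :=
  (forall B : set R, measurable B -> sigmaX X (g @^-1` B)) /\
  (forall E : set T, sigmaX X E ->
     (\int[P]_(w in E) (Y w)%:E = \int[P]_(w in E) (g w)%:E)%E).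

Definition Risk (d : measure_display) (T : measurableType d) (R : realType)
  (P : probability T R) (d1 d2 : nat) (X : T -> 'M[R]_(d1, d2)) (Y : T -> R)
  (pi : R) (phi : 'M[R]_(d1, d2) -> R) : \bar R :=
  ((2^-1)%:E * \int[P]_w (`|Y w - pi| * `|sgn (Y w - pi) - sgn (phi (X w))|)%:E)%E.

From HB Require Import structures.
From mathcomp Require Import all_boot all_order all_algebra.
From mathcomp Require Import all_classical all_reals all_analysis.
From mathcomp Require Import lra measurable_realfun.
Set Implicit Arguments. Unset Strict Implicit. Unset Printing Implicit Defensive.
Import Order.TTheory GRing.Theory Num.Theory.
Local Open Scope classical_set_scope.
Local Open Scope ring_scope.

(* Since |y| |sgn y - s| = |y| - s y for s = +-1, the risk of a classifier phi is
   (E|Y - pi| - E[sgn(phi X) (Y - pi)]) / 2.  When sgn(phi X) is sigma(X)-measurable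
   the tower property replaces Y by f(X) = E(Y | X) in the last expectation, and
   pointwise sgn(phi X) (f X - pi) <= sgn(f X - pi) (f X - pi).  Hence the Bayes
   rule sgn(f - pi), which by sign representability is the sign of an affine
   function of rank at most r, minimizes the risk over Phi(r); any fbar with the
   same sign has the same risk. *)

Section Sgn.
Context (R : realType).
Implicit Types x y z : R.

Lemma normr_sgn x : `|sgn x| = 1.
Proof. by rewrite /sgn; case: ifP; rewrite ?normrN normr1. Qed.

Lemma sgn_weighted_loss y z : `|y| * `|sgn y - sgn z| = `|y| - sgn z * y.
Proof.
rewrite /sgn; case: (ltP 0 y) => [y_gt0|y_le0] /=; case: ifP => _.
- by rewrite subrr normr0 mulr0 mul1r gtr0_norm // subrr.
- by rewrite gtr0_norm // ger0_norm; lra.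
- by rewrite ler0_norm // ler0_norm; lra.
- by rewrite opprK addNr normr0 mulr0 ler0_norm //; lra.
Qed.

Lemma mulr_sgn_le x z : sgn z * x <= sgn x * x.
Proof. by rewrite /sgn; case: (ltP 0 x) => ? /=; case: ifP => _; lra. Qed.

End Sgn.

Section BoundedIntegrals.
Context d (T : measurableType d) (R : realType) (P : probability T R).
Implicit Types (g u v : T -> R) (E : set T) (c : R).

Lemma integrable_bounded u c : measurable_fun setT u ->
  (forall w, `|u w| <= c) -> P.-integrable setT (EFin \o u).
Proof.
move=> mu u_le; apply: measurable_bounded_integrable => //.
  exact: (le_lt_trans (probability_le1 P measurableT) (ltry 1)).
exists c; split; first exact: num_real.
by move=> M c_lt_M w _ /=; rewrite (le_trans (u_le w)) // ltW.
Qed.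

Lemma integrable_boundedS E u c : measurable E -> measurable_fun setT u ->
  (forall w, `|u w| <= c) -> P.-integrable E (EFin \o u).
Proof.
move=> mE mu u_le.
apply: (integrableS measurableT mE (@subsetT _ _)); exact: integrable_bounded u_le.
Qed.

Lemma measurable_sgn_comp g : measurable [set w | 0 < g w] ->
  measurable_fun setT (fun w => sgn (g w)).
Proof.
move=> mA; apply: measurable_fun_ifT => //.
by apply: (measurable_fun_bool true); rewrite setTI.
Qed.

Lemma integrable_mul_sgn g u c : measurable [set w | 0 < g w] ->
  measurable_fun setT u -> (forall w, `|u w| <= c) ->
  P.-integrable setT (EFin \o (fun w => sgn (g w) * u w)).
Proof.
move=> mA mu u_le; apply: integrable_bounded.
  exact: measurable_funM (measurable_sgn_comp mA) mu.
by move=> w; rewrite normrM normr_sgn mul1r.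
Qed.

Lemma integral_mul_sgn g u c : measurable [set w | 0 < g w] ->
  measurable_fun setT u -> (forall w, `|u w| <= c) ->
  (\int[P]_w (sgn (g w) * u w)%:E =
   \int[P]_(w in [set w | 0 < g w]%R) (u w)%:E
   - \int[P]_(w in ~` [set w | 0 < g w]%R) (u w)%:E)%E.
Proof.
set A := [set w | 0 < g w] => mA mu u_le.
have mAC := measurableC mA.
rewrite -(setUv A) integral_setU //; last first.
- by apply/disj_set2P; rewrite setICr.
- rewrite setUv; apply/measurable_EFinP.
  exact: measurable_funM (measurable_sgn_comp mA) mu.
congr (_ + _).
  by apply: eq_integral => w /[!inE] Aw; rewrite /sgn Aw mul1r.
rewrite -integralN; last exact/integrable_add_def/(integrable_boundedS mAC mu u_le).
apply: eq_integral => w /[!inE] Aw; rewrite /sgn ifF ?mulN1r //.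
exact/negbTE/negP.
Qed.

Lemma integral_subr_eq E u v c k : measurable E ->
  measurable_fun setT u -> measurable_fun setT v ->
  (forall w, `|u w| <= k) -> (forall w, `|v w| <= k) ->
  (\int[P]_(w in E) (u w)%:E = \int[P]_(w in E) (v w)%:E)%E ->
  (\int[P]_(w in E) (u w - c)%:E = \int[P]_(w in E) (v w - c)%:E)%E.
Proof.
move=> mE mu mv u_le v_le uv.
have ic : P.-integrable E (EFin \o cst c).
  by apply: (@integrable_boundedS _ _ `|c|) => //; exact: measurable_cst.
have iu := integrable_boundedS mE mu u_le.
have iv := integrable_boundedS mE mv v_le.
under eq_integral do rewrite EFinB.
under [RHS]eq_integral do rewrite EFinB.
by rewrite !integralB_EFin // uv.
Qed.

End BoundedIntegrals.

Lemma measurable_affine_comp d (T : measurableType d) (R : realType) d1 d2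
    (X : T -> 'M[R]_(d1, d2)) (B : 'M[R]_(d1, d2)) (b : R) :
  (forall i j, measurable_fun setT (fun w => X w i j)) ->
  measurable_fun setT (fun w => matdot (X w) B + b).
Proof.
move=> mX; apply: measurable_funD; last exact: measurable_cst.
have matdotE w : matdot (X w) B = \sum_i \sum_j X w i j * B i j.
  rewrite /matdot /mxtrace; apply: eq_bigr => i _; rewrite !mxE.
  by apply: eq_bigr => j _; rewrite mxE.
under eq_fun do rewrite matdotE.
apply: measurable_sum => i; apply: measurable_sum => j.
by apply: measurable_funM => //; exact: measurable_cst.
Qed.

Section SigmaX.
Context d (T : measurableType d) (R : realType) (d1 d2 : nat)
  (X : T -> 'M[R]_(d1, d2)).

Lemma sigmaX_measurable : (forall i j, measurable_fun setT (fun w => X w i j)) ->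
  forall E, sigmaX X E -> measurable E.
Proof.
move=> mX; apply: smallest_sub; first exact: sigma_algebra_measurable.
by move=> _ [ij _ [U mU <-]]; exact: mX measurableT U mU.
Qed.

(* The entries of X are measurable for sigma(X) itself, viewed as the
   measurable structure of [g_sigma_algebraType]. *)
Lemma sigmaX_affine_pos B b : sigmaX X [set w | 0 < matdot (X w) B + b].
Proof.
pose TX := g_sigma_algebraType
  (\bigcup_(ij in [set: 'I_d1 * 'I_d2])
     preimage_set_system setT (fun w => X w ij.1 ij.2) (@measurable _ R)).
have mX i j : measurable_fun (setT : set TX) (fun w => X w i j).
  move=> _ U mU; rewrite setTI; apply: sub_sigma_algebra.
  by exists (i, j) => //; exists U => //; rewrite setTI.
have := @measurable_affine_comp _ TX R d1 d2 X B b mX measurableT _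
  (measurable_itv `]0, +oo[).
by rewrite setTI preimage_itvoy.
Qed.

End SigmaX.

Lemma cond_exp_measurable d (T : measurableType d) (R : realType)
    (P : probability T R) d1 d2 (X : T -> 'M[R]_(d1, d2)) (Y g : T -> R) :
  (forall i j, measurable_fun setT (fun w => X w i j)) ->
  is_cond_exp P X Y g -> measurable_fun setT g.
Proof.
move=> mX [g_sigmaX _] _ U mU; rewrite setTI.
exact: sigmaX_measurable mX _ (g_sigmaX U mU).
Qed.

Section Risk.
Context d (T : measurableType d) (R : realType) (P : probability T R)
  (d1 d2 : nat) (X : T -> 'M[R]_(d1, d2)) (Y : T -> R) (pi : R).
Implicit Types phi psi : 'M[R]_(d1, d2) -> R.

Lemma eq_Risk phi psi : (forall w, sgn (phi (X w)) = sgn (psi (X w))) ->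
  Risk P X Y pi phi = Risk P X Y pi psi.
Proof. by move=> phi_psi; congr (_ * _)%E; apply: eq_integral => w _; rewrite phi_psi. Qed.

Lemma RiskE phi c : measurable_fun setT Y -> (forall w, `|Y w - pi| <= c) ->
  measurable [set w | 0 < phi (X w)] ->
  Risk P X Y pi phi = ((2^-1)%:E * (\int[P]_w (`|Y w - pi|)%:E
     - \int[P]_w (sgn (phi (X w)) * (Y w - pi))%:E))%E.
Proof.
move=> mY Ypi_le mphi.
have mYpi : measurable_fun setT (fun w => Y w - pi).
  by apply: measurable_funB => //; exact: measurable_cst.
rewrite /Risk; congr (_ * _)%E.
under eq_integral => w _ do rewrite sgn_weighted_loss EFinB.
rewrite integralB_EFin //.
- apply: integrable_bounded; first exact: measurableT_comp.
  by move=> w; rewrite normr_id; exact: Ypi_le.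
- exact: integrable_mul_sgn mphi mYpi Ypi_le.
Qed.

Lemma integral_sgn_cond_exp g h c : is_cond_exp P X Y g ->
  (forall i j, measurable_fun setT (fun w => X w i j)) -> measurable_fun setT Y ->
  (forall w, `|Y w| <= c) -> (forall w, `|g w| <= c) ->
  sigmaX X [set w | 0 < h w] ->
  (\int[P]_w (sgn (h w) * (Y w - pi))%:E =
   \int[P]_w (sgn (h w) * (g w - pi))%:E)%E.
Proof.
move=> ce mX mY Y_le g_le h_sigmaX; have [_ Y_g] := ce.
have mE := sigmaX_measurable mX.
have mg := cond_exp_measurable mX ce.
have sub_le (u : T -> R) : (forall w, `|u w| <= c) -> forall w, `|u w - pi| <= c + `|pi|.
  by move=> u_le w; apply: le_trans (ler_normB _ _) _; rewrite lerD2r.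
have mB (u : T -> R) : measurable_fun setT u -> measurable_fun setT (fun w => u w - pi).
  by move=> mu; apply: measurable_funB => //; exact: measurable_cst.
have mA := mE _ h_sigmaX.
rewrite (integral_mul_sgn P mA (mB _ mY) (sub_le _ Y_le)).
rewrite (integral_mul_sgn P mA (mB _ mg) (sub_le _ g_le)).
by congr (_ - _)%E; apply: integral_subr_eq Y_le g_le _ => //;
  [exact: Y_g | exact: measurableC | apply: Y_g; exact: sigma_algebraC].
Qed.

Lemma Risk_cond_exp_sgn_le f phi psi : is_cond_exp P X Y (f \o X) ->
  (forall i j, measurable_fun setT (fun w => X w i j)) -> measurable_fun setT Y ->
  (forall w, -1 <= Y w <= 1) -> (forall w, -1 <= f (X w) <= 1) -> -1 <= pi <= 1 ->
  sigmaX X [set w | 0 < phi (X w)] -> sigmaX X [set w | 0 < psi (X w)] ->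
  (forall w, sgn (psi (X w)) = sgn (f (X w) - pi)) ->
  (Risk P X Y pi psi <= Risk P X Y pi phi)%E.
Proof.
move=> ce mX mY Y_bnd f_bnd pi_bnd phi_sigmaX psi_sigmaX psi_f.
have Y_le w : `|Y w| <= 1 by rewrite ler_norml.
have f_le w : `|f (X w)| <= 1 by rewrite ler_norml.
have Ypi_le w : `|Y w - pi| <= 2.
  by apply: le_trans (ler_normB _ _) _; apply: lerD; rewrite // ler_norml.
have mE := sigmaX_measurable mX.
rewrite (RiskE mY Ypi_le (mE _ psi_sigmaX)) (RiskE mY Ypi_le (mE _ phi_sigmaX)).
apply: lee_wpmul2l; first by rewrite lee_fin invr_ge0.
apply: leeB => //.
rewrite !(integral_sgn_cond_exp ce mX mY Y_le f_le) //.
have mfXpi : measurable_fun setT (fun w => (f \o X) w - pi).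
  by apply: measurable_funB; [exact: cond_exp_measurable ce | exact: measurable_cst].
have fXpi_le w : `|(f \o X) w - pi| <= 2.
  by apply: le_trans (ler_normB _ _) _; apply: lerD; [exact: f_le | rewrite ler_norml].
apply: le_integral => //.
- exact: integrable_mul_sgn (mE _ phi_sigmaX) mfXpi fXpi_le.
- exact: integrable_mul_sgn (mE _ psi_sigmaX) mfXpi fXpi_le.
- by move=> w _; rewrite lee_fin psi_f; exact: mulr_sgn_le.
Qed.
End Risk.

Theorem theorem1 (d : measure_display) (T : measurableType d) (R : realType)
  (P : probability T R) (d1 d2 : nat)
  (Xs : set 'M[R]_(d1, d2)) (X : T -> 'M[R]_(d1, d2)) (Y : T -> R)
  (f : 'M[R]_(d1, d2) -> R) (pi : R) (r : nat) :
  (forall i j, measurable_fun setT (fun w => X w i j)) ->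
  measurable_fun setT Y ->
  (forall w, Xs (X w)) ->
  (forall M, Xs M -> -1 <= f M <= 1) ->
  (forall w, -1 <= Y w <= 1) ->
  is_cond_exp P X Y (f \o X) ->
  -1 <= pi <= 1 ->
  (0 < r)%N ->
  sign_representable Xs f r pi ->
  forall fbar : 'M[R]_(d1, d2) -> R,
    (forall M, Xs M -> sgn (fbar M) = sgn (f M - pi)) ->
    Risk P X Y pi fbar = ereal_inf [set Risk P X Y pi phi | phi in @Phi R d1 d2 r].
Proof.
move=> mX mY XsX f_bnd Y_bnd ce pi_bnd _ [B0 [b0 [rkB0 B0_rep]]] fbar fbar_sgn.
pose phi0 M := matdot M B0 + b0.
have phi0_Phi : Phi r phi0 by exists B0, b0; split.
have -> : Risk P X Y pi fbar = Risk P X Y pi phi0.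
  by apply: eq_Risk => w; rewrite fbar_sgn // B0_rep.
apply/eqP; rewrite eq_le; apply/andP; split; last first.
  by apply: ereal_inf_lbound; exists phi0.
apply: le_ereal_inf_tmp => _ [_ [B [b [_ ->]]] <-].
apply: (Risk_cond_exp_sgn_le ce mX mY Y_bnd) => //; try exact: sigmaX_affine_pos.
- by move=> w; apply/f_bnd/XsX.
- by move=> w; rewrite -B0_rep.
Qed.
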